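(* Let $\sigma(\boldsymbol\epsilon)$ be the (complex form) covariance matrix of a family of $N$-mode Gaussian states depending differentiably on $\boldsymbol\epsilon$, let $A=K\sigma$, and let $\lambda_{\min}$ be the smallest symplectic eigenvalue of $\sigma$, assumed to satisfy $\lambda_{\min}>1$. For an integer $M\ge 0$ define the remainder $R_M^{ij}=\frac12\sum_{n=M+1}^\infty\operatorname{tr}\big[A^{-n}\partial_iA\,A^{-n}\partial_jA\big]$. Then \[ |R_M^{ij}|\le\frac{\sqrt{\operatorname{tr}[(A\partial_iA)^2]}\,\sqrt{\operatorname{tr}[(A\partial_jA)^2]}}{2\lambda_{\min}^{2(M+1)}(\lambda_{\min}^2-1)}. \]
   Context: Bosonic system with $N$ modes; $\hat{\mathbf A}=(\hat a_1,\dots,\hat a_N,\hat a_1^\dagger,\dots,\hat a_N^\dagger)^T$; $K=\begin{bmatrix}I&0\\0&-I\end{bmatrix}$. For a Gaussian state $\hat\rho$, $\boldsymbol d^m=\operatorname{tr}[\hat\rho\hat{\mathbf A}^m]$, $\Delta\hat{\mathbf A}=\hat{\mathbf A}-\boldsymbol d$, $\sigma^{mn}=\operatorname{tr}[\hat\rho\{\Delta\hat{\mathbf A}^m,(\Delta\hat{\mathbf A}^n)^\dagger\}]$. Symplectic eigenvalues are the positive eigenvalues of $K\sigma$. $\partial_i=\partial/\partial\epsilon_i$. *)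

From HB Require Import structures.
From mathcomp Require Import all_boot all_order all_algebra.
From mathcomp Require Import all_classical all_reals all_analysis.
From mathcomp Require Import complex.
Set Implicit Arguments. Unset Strict Implicit. Unset Printing Implicit Defensive.
Import Order.TTheory GRing.Theory Num.Theory.
Import numFieldNormedType.Exports.
Local Open Scope ring_scope.
Local Open Scope complex_scope.
Local Open Scope classical_set_scope.

Section Defs.
Variable R : realType.
Local Notation C := (R[i]).

Definition adjmx (m n : nat) (M : 'M[C]_(m, n)) : 'M[C]_(n, m) :=
  (map_mx (fun z : C => z^*) M)^T.

Definition Kmx (N : nat) : 'M[C]_(N + N) :=
  block_mx 1%:M 0 0 (- 1%:M).

(* Structure of a complex-form covariance matrix of an N-mode (Gaussian) state:
   Hermitian, of the block form [[X, Y], [conj Y, conj X]] (coming from the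
   ordering (a_1..a_N, a_1^dag..a_N^dag)), and positive definite. *)
Definition is_cov_mx (N : nat) (s : 'M[C]_(N + N)) : Prop :=
  [/\ adjmx s = s,
      exists X Y : 'M[C]_N,
        s = block_mx X Y (map_mx (fun z : C => z^*) Y)
                         (map_mx (fun z : C => z^*) X)
    & forall v : 'cV[C]_(N + N), v != 0 -> 0 < (adjmx v *m s *m v) 0 0].

Definition symp_eig (N : nat) (s : 'M[C]_(N + N)) (l : C) : Prop :=
  0 < l /\ eigenvalue (Kmx N *m s) l.

Definition min_symp_eig (N : nat) (s : 'M[C]_(N + N)) (l : C) : Prop :=
  symp_eig s l /\ forall mu, symp_eig s mu -> l <= mu.

Definition unitv (p : nat) (i : 'I_p) : 'rV[R]_p := delta_mx 0 i.

Definition cpartial (p : nat) (f : 'rV[R]_p -> C) (i : 'I_p) (e : 'rV[R]_p) : C :=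
  ('D_(unitv i) (fun x => complex.Re (f x)) e) +i* ('D_(unitv i) (fun x => complex.Im (f x)) e).

Definition mxpartial (p n : nat) (F : 'rV[R]_p -> 'M[C]_n) (i : 'I_p) (e : 'rV[R]_p)
  : 'M[C]_n := \matrix_(a, b) cpartial (fun x => F x a b) i e.

Definition mx_differentiable (p n : nat) (F : 'rV[R]_p -> 'M[C]_n) : Prop :=
  forall (a b : 'I_n) (e : 'rV[R]_p),
    differentiable (fun x => complex.Re (F x a b)) e /\
    differentiable (fun x => complex.Im (F x a b)) e.

Definition cseries_to (t : nat -> C) (k : nat) (r : C) : Prop :=
  (fun K : nat => complex.Re (\sum_(k <= n < K) t n)) @ \oo --> complex.Re r /\
  (fun K : nat => complex.Im (\sum_(k <= n < K) t n)) @ \oo --> complex.Im r.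

End Defs.

From HB Require Import structures.
From mathcomp Require Import all_boot all_order all_algebra.
From mathcomp Require Import all_classical all_reals all_analysis.
From mathcomp Require Import complex.
From mathcomp Require Import spectral sesquilinear.
From mathcomp Require Import ring.
Import Order.TTheory GRing.Theory Num.Theory Num.Def.
Import numFieldNormedType.Exports.
Set Implicit Arguments. Unset Strict Implicit. Unset Printing Implicit Defensive.
Local Open Scope ring_scope.
Local Open Scope sesquilinear_scope.

(* Since σ is positive definite and K is a Hermitian involution, one congruence Y
   gives Y σ Y* = 1 and Y σ K = diag(b) Y with b real.  Then A = Kσ = Y* diag(b) (Yσ)
   with Y* and Yσ mutually inverse, so the rows of Yσ are eigenvectors of A and
   tr[A^-n ∂_iA A^-n ∂_jA] = Σ_kl (b_k b_l)^-n b_k b_l G_kl H_lk with the Hermitian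
   matrices G = Y ∂_iσ Y*, H = Y ∂_jσ Y*.  The block structure of σ makes the
   spectrum of A symmetric under x ↦ -x, so every |b_k| is a symplectic eigenvalue
   and |b_k| ≥ λ_min.  Hence R_M is a finite sum of geometric tails of ratio at most
   λ_min^-2, and Cauchy–Schwarz bounds Σ_kl |b_k b_l|^2 |G_kl| |H_lk| by the square
   roots of tr[(A∂_iA)^2] = Σ_kl |b_k b_l G_kl|^2 and of its analogue for j. *)

Section HermitianMatrices.
Variable C : numClosedFieldType.

Lemma trmxC_mul m n p (A : 'M[C]_(m, n)) (B : 'M[C]_(n, p)) :
  (A *m B)^t* = B^t* *m A^t*.
Proof. by rewrite trmx_mul map_mxM. Qed.

Lemma trmxC1 n : (1%:M : 'M[C]_n)^t* = 1%:M.
Proof. by rewrite trmx1 map_mx1. Qed.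

Lemma trmxC_diag n (d : 'rV[C]_n) : (diag_mx d)^t* = diag_mx (map_mx conjC d).
Proof. by rewrite tr_diag_mx map_diag_mx. Qed.

Lemma diag_mxM n (x y : 'rV[C]_n) :
  diag_mx x *m diag_mx y = diag_mx (\row_k (x 0 k * y 0 k)).
Proof.
apply/matrixP => a b; rewrite mul_diag_mx !mxE.
by case: eqP => [->|]; rewrite ?mulr1n ?mulr0n ?mulr0.
Qed.

Lemma row_neq0_mulmx1 n (P Q : 'M[C]_n) k : P *m Q = 1%:M -> row k P != 0.
Proof.
move=> PQ; apply/eqP => Pk0.
have : (P *m Q) k k = 1 by rewrite PQ mxE eqxx.
rewrite mxE big1 => [/eqP|j _]; first by rewrite eq_sym oner_eq0.
by have /rowP/(_ j) := Pk0; rewrite !mxE => ->; rewrite mul0r.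
Qed.

Lemma similar_diag_mx_exp n (V W : 'M[C]_n) (x : 'rV[C]_n) m :
  W *m V = 1%:M ->
  (V *m diag_mx x *m W) ^+ m = V *m diag_mx (\row_k (x 0 k ^+ m)) *m W.
Proof.
move=> WV; elim: m => [|m IH].
  have -> : \row_k (x 0 k ^+ 0) = const_mx 1 by apply/rowP => k; rewrite !mxE.
  by rewrite diag_const_mx mulmx1 (mulmx1C WV).
rewrite exprS IH -mulmxE !mulmxA -(mulmxA _ W V) WV mulmx1 -(mulmxA V) diag_mxM.
by congr (_ *m diag_mx _ *m _); apply/rowP => k; rewrite !mxE exprS.
Qed.

Lemma invmx_similar_diag_mx n (V W : 'M[C]_n) (x : 'rV[C]_n) :
  W *m V = 1%:M -> (forall k, x 0 k != 0) ->
  invmx (V *m diag_mx x *m W) = V *m diag_mx (\row_k (x 0 k)^-1) *m W.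
Proof.
move=> WV x0.
have inv : V *m diag_mx x *m W *m (V *m diag_mx (\row_k (x 0 k)^-1) *m W) = 1%:M.
  rewrite !mulmxA -(mulmxA _ W V) WV mulmx1 -(mulmxA V) diag_mxM.
  have -> : \row_k (x 0 k * (\row_k (x 0 k)^-1) 0 k) = const_mx 1.
    by apply/rowP => k; rewrite !mxE mulfV.
  by rewrite diag_const_mx mulmx1 (mulmx1C WV).
by rewrite -[LHS]mulmx1 -inv mulKmx // (mulmx1_unit inv).1.
Qed.

Lemma mxtrace_diag_mul n (x y : 'rV[C]_n) (G H : 'M[C]_n) :
  \tr (diag_mx x *m G *m (diag_mx y *m H)) =
  \sum_k \sum_l x 0 k * G k l * y 0 l * H l k.
Proof.
apply: eq_bigr => k _; rewrite mxE; apply: eq_bigr => l _.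
by rewrite !mul_diag_mx !mxE mulrA.
Qed.

Lemma hermitian_spectral n (A : 'M[C]_n) : A^t* = A ->
  let P := spectralmx A in let d := spectral_diag A in
  [/\ A = P^t* *m diag_mx d *m P, P *m P^t* = 1%:M, P^t* *m P = 1%:M
    & forall k, d 0 k \is Num.real].
Proof.
move=> hA P d.
have Aherm : A \is hermsymmx by rewrite is_hermitianmxE expr0 scale1r hA.
have Pu : P \is unitarymx := spectral_unitarymx A.
have PPt : P *m P^t* = 1%:M by apply/unitarymxP.
split => //; last 2 first.
- exact: mulmx1C.
- by move=> k; apply/(mxOverP (hermitian_spectral_diag_real Aherm)).
by rewrite -invmx_unitary //; apply/orthomx_spectralP/hermitian_normalmx.
Qed.


Lemma posdef_factor n (s : 'M[C]_n) : s^t* = s ->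
  (forall u : 'rV_n, u != 0 -> 0 < (u *m s *m u^t*) 0 0) ->
  exists L Li : 'M[C]_n, L *m Li = 1%:M /\ L *m L^t* = s.
Proof.
move=> hs s_pd.
have [sE PPt PtP _] := hermitian_spectral hs.
set P := spectralmx s in sE PPt PtP; set d := spectral_diag s in sE.
have d_gt0 k : 0 < d 0 k.
  have := s_pd (row k P) (row_neq0_mulmx1 k PPt).
  have -> : (row k P *m s *m (row k P)^t*) 0 0 = (P *m s *m P^t*) k k.
    by rewrite -row_mul tr_row map_col !mxE; apply: eq_bigr => j _; rewrite !mxE.
  by rewrite sE !mulmxA PPt mul1mx -mulmxA PPt mulmx1 mxE eqxx mulr1n.
pose r := \row_k sqrtC (d 0 k); pose ri := \row_k (sqrtC (d 0 k))^-1.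
have r_real : map_mx conjC r = r.
  by apply/rowP => k; rewrite !mxE conj_Creal // ger0_real // sqrtC_ge0 ltW.
have r_ri : diag_mx r *m diag_mx ri = 1%:M.
  rewrite diag_mxM; apply/matrixP => a c; rewrite !mxE.
  by case: eqP => // _; rewrite mulfV // sqrtC_eq0 gt_eqF.
have r_sqr : diag_mx r *m diag_mx r = diag_mx d.
  by rewrite diag_mxM; congr diag_mx; apply/rowP => k; rewrite !mxE -expr2 sqrtCK.
exists (P^t* *m diag_mx r), (diag_mx ri *m P); split.
  by rewrite mulmxA -(mulmxA _ (diag_mx r)) r_ri mulmx1 PtP.
by rewrite trmxC_mul trmxCK trmxC_diag r_real mulmxA -(mulmxA (P^t*)) r_sqr -sE.
Qed.

Lemma simultaneous_diag n (s K : 'M[C]_n) : s^t* = s ->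
  (forall u : 'rV_n, u != 0 -> 0 < (u *m s *m u^t*) 0 0) -> K^t* = K ->
  exists (Y : 'M[C]_n) (b : 'rV[C]_n),
    [/\ Y *m s *m Y^t* = 1%:M, Y *m s *m K = diag_mx b *m Y
      & forall k, b 0 k \is Num.real].
Proof.
move=> hs s_pd hK.
have [L [Li [LLi LLt]]] := posdef_factor hs s_pd.
have LiL : Li *m L = 1%:M by apply: mulmx1C.
pose B := L^t* *m K *m L.
have hB : B^t* = B by rewrite /B !trmxC_mul trmxCK hK mulmxA.
have [BE QQt _ b_real] := hermitian_spectral hB.
set Q := spectralmx B in BE QQt; set b := spectral_diag B in BE b_real.
exists (Q *m Li), b; split => //.
  rewrite -LLt trmxC_mul !mulmxA -(mulmxA Q Li L) LiL mulmx1.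
  by rewrite -(mulmxA Q (L^t*) (Li^t*)) -trmxC_mul LiL trmxC1 mulmx1 QQt.
rewrite -LLt !mulmxA -(mulmxA Q Li L) LiL mulmx1.
have -> : Q *m L^t* *m K = Q *m B *m Li.
  by rewrite /B !mulmxA -(mulmxA _ L Li) LLi mulmx1.
by rewrite BE !mulmxA QQt mul1mx.
Qed.

Lemma hermitian_congr m n (Y : 'M[C]_(m, n)) (D : 'M[C]_n) :
  D^t* = D -> (Y *m D *m Y^t*)^t* = Y *m D *m Y^t*.
Proof. by move=> hD; rewrite !trmxC_mul trmxCK hD mulmxA. Qed.

Lemma hermitian_conj_entry n (G : 'M[C]_n) k l : G^t* = G -> conjC (G k l) = G l k.
Proof. by move=> hG; rewrite -[in RHS]hG !mxE. Qed.

End HermitianMatrices.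

Section SimultaneousDiagonalForm.
Variables (C : numClosedFieldType) (n : nat) (s K Y : 'M[C]_n) (b : 'rV[C]_n).
Hypotheses (KK : K *m K = 1%:M) (YsY : Y *m s *m Y^t* = 1%:M)
  (YsK : Y *m s *m K = diag_mx b *m Y).

Lemma pencil_mulmx1 : Y^t* *m (Y *m s) = 1%:M.
Proof. exact: mulmx1C. Qed.

Lemma pencil_left_eigen : Y *m s *m (K *m s) = diag_mx b *m (Y *m s).
Proof. by rewrite mulmxA YsK mulmxA. Qed.

Lemma pencil_KsE : K *m s = Y^t* *m diag_mx b *m (Y *m s).
Proof. by rewrite -mulmxA -pencil_left_eigen mulmxA pencil_mulmx1 mul1mx. Qed.

Lemma pencil_eig_neq0 k : b 0 k != 0.
Proof.
have [Ku _] := mulmx1_unit KK.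
have [Yu] : Y \in unitmx /\ s *m Y^t* \in unitmx.
  by apply: mulmx1_unit; rewrite mulmxA.
rewrite unitmx_mul => /andP[su _].
have [Ytu _] := mulmx1_unit pencil_mulmx1.
have : diag_mx b \in unitmx.
  have -> : diag_mx b = Y *m s *m (K *m s) *m Y^t*.
    by rewrite pencil_left_eigen -mulmxA YsY mulmx1.
  by rewrite !unitmx_mul Yu su Ku Ytu.
move=> /mulmxV /matrixP /(_ k k); rewrite mul_diag_mx !mxE eqxx.
by apply: contra_eqN => /eqP ->; rewrite mul0r eq_sym oner_eq0.
Qed.

Lemma pencil_row_neq0 k : row k (Y *m s) != 0.
Proof. exact: row_neq0_mulmx1 YsY. Qed.

Lemma pencil_row_eigen k :
  row k (Y *m s) *m (K *m s) = b 0 k *: row k (Y *m s).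
Proof.
by rewrite -row_mul pencil_left_eigen mul_diag_mx; apply/rowP => l; rewrite !mxE.
Qed.

Lemma pencil_invmx_exp m :
  invmx (K *m s) ^+ m = Y^t* *m diag_mx (\row_k ((b 0 k)^-1 ^+ m)) *m (Y *m s).
Proof.
rewrite pencil_KsE invmx_similar_diag_mx ?similar_diag_mx_exp //; last exact: pencil_eig_neq0.
by congr (_ *m diag_mx _ *m _); apply/rowP => k; rewrite !mxE.
Qed.

Lemma pencil_trace (x y : 'rV[C]_n) (X Z : 'M[C]_n) :
  \tr (Y^t* *m diag_mx x *m (Y *m s) *m (K *m X) *m
       (Y^t* *m diag_mx y *m (Y *m s) *m (K *m Z))) =
  \sum_k \sum_l x 0 k * b 0 k * (Y *m X *m Y^t*) k l *
                (y 0 l * b 0 l) * (Y *m Z *m Y^t*) l k.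
Proof.
have YsKE W : Y *m s *m (K *m W) *m Y^t* = diag_mx b *m (Y *m W *m Y^t*).
  by rewrite mulmxA YsK -!mulmxA.
have trace_cycle : \tr (Y^t* *m diag_mx x *m (Y *m s) *m (K *m X) *m
                   (Y^t* *m diag_mx y *m (Y *m s) *m (K *m Z))) =
             \tr (diag_mx x *m (Y *m s *m (K *m X) *m Y^t*) *m
                   (diag_mx y *m (Y *m s *m (K *m Z) *m Y^t*))).
  by rewrite -!mulmxA [in LHS]mxtrace_mulC -!mulmxA.
rewrite trace_cycle !YsKE !(mulmxA (diag_mx _) (diag_mx _)) !diag_mxM mxtrace_diag_mul.
by apply: eq_bigr => k _; apply: eq_bigr => l _; rewrite !mxE.
Qed.

Lemma pencil_trace_invmx_exp m (X Z : 'M[C]_n) :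
  \tr (invmx (K *m s) ^+ m *m (K *m X) *m (invmx (K *m s) ^+ m *m (K *m Z))) =
  \sum_k \sum_l ((b 0 k)^-1 ^+ m * b 0 k) * (Y *m X *m Y^t*) k l *
                ((b 0 l)^-1 ^+ m * b 0 l) * (Y *m Z *m Y^t*) l k.
Proof.
rewrite pencil_invmx_exp pencil_trace.
by apply: eq_bigr => k _; apply: eq_bigr => l _; rewrite !mxE.
Qed.

Lemma pencil_trace_sqr (X Z : 'M[C]_n) :
  \tr (K *m s *m (K *m X) *m (K *m s *m (K *m Z))) =
  \sum_k \sum_l b 0 k ^+ 2 * (Y *m X *m Y^t*) k l *
                b 0 l ^+ 2 * (Y *m Z *m Y^t*) l k.
Proof.
rewrite pencil_KsE pencil_trace.
by apply: eq_bigr => k _; apply: eq_bigr => l _; rewrite !expr2.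
Qed.

End SimultaneousDiagonalForm.

Section SymplecticSpectrum.
Variables (R : realType) (N : nat).
Local Notation C := (R[i]).
Local Notation K := (@Kmx R N).

Definition Jmx : 'M[C]_(N + N) := block_mx 0 1%:M 1%:M 0.

Lemma Kmx_involutive : K *m K = 1%:M.
Proof.
rewrite /Kmx mulmx_block !mulmx0 !mul0mx !mulmx1 !addr0 !add0r mulmxN mulmx1 opprK.
by rewrite -scalar_mx_block.
Qed.

Lemma Kmx_conj : map_mx conjC K = K.
Proof. by rewrite /Kmx map_block_mx map_mxN !map_mx1 !map_mx0. Qed.

Lemma trmxC_Kmx : K^t* = K.
Proof.
rewrite /Kmx tr_block_mx !trmx0 linearN /= !trmx1.
by rewrite map_block_mx map_mxN !map_mx1 !map_mx0.
Qed.

Lemma Jmx_involutive : Jmx *m Jmx = 1%:M.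
Proof.
rewrite /Jmx mulmx_block !mulmx0 !mul0mx !mulmx1 !addr0 !add0r.
by rewrite -scalar_mx_block.
Qed.

Lemma Jmx_Kmx : Jmx *m K = - (K *m Jmx).
Proof.
rewrite /Jmx /Kmx !mulmx_block !mulmx0 !mul0mx !mulmx1 !mul1mx !addr0 !add0r.
by rewrite opp_block_mx !oppr0 opprK.
Qed.

Lemma Jmx_cov_block (s : 'M[C]_(N + N)) :
  (exists X Y : 'M[C]_N, s = block_mx X Y (map_mx (fun z : C => z^*%C) Y)
                                     (map_mx (fun z : C => z^*%C) X)) ->
  Jmx *m s = map_mx conjC s *m Jmx.
Proof.
move=> [X [Y ->]].
rewrite /Jmx map_block_mx !mulmx_block !mulmx0 !mul0mx !mulmx1 !mul1mx !addr0 !add0r.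
have conjK (Z : 'M[C]_N) : map_mx conjC (map_mx (fun z : C => z^*%C) Z) = Z.
  by apply/matrixP => a b; rewrite !mxE conjCK.
by rewrite !conjK.
Qed.

(* [v |-> conj v J] maps left eigenvectors of [K s] for [mu] to ones for [- mu]. *)
Lemma eigenvalue_Kmx_opp (s : 'M[C]_(N + N)) (v : 'rV[C]_(N + N)) (mu : C) :
  Jmx *m s = map_mx conjC s *m Jmx -> mu \is Num.real -> v != 0 ->
  v *m (K *m s) = mu *: v -> eigenvalue (K *m s) (- mu).
Proof.
move=> hJ mu_real v0 hv; apply/eigenvalueP; exists (map_mx conjC v *m Jmx).
  have vKs : v *m K *m s = mu *: v by rewrite -mulmxA.
  rewrite mulmxA -(mulmxA _ Jmx K) Jmx_Kmx mulmxN mulNmx -mulmxA -(mulmxA K) hJ.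
  rewrite -Kmx_conj !mulmxA -!map_mxM vKs map_mxZ /= (conj_Creal mu_real) scaleNr.
  by rewrite -scalemxAl.
apply/eqP => h0; move/eqP: v0; apply.
have : map_mx conjC v = 0 by rewrite -[map_mx _ v]mulmx1 -Jmx_involutive mulmxA h0 mul0mx.
move/(congr1 (map_mx conjC)); rewrite map_mx0 => <-.
by apply/matrixP => a b; rewrite !mxE conjCK.
Qed.

Lemma min_symp_eig_le_norm (s : 'M[C]_(N + N)) (lmin mu : C) (v : 'rV[C]_(N + N)) :
  min_symp_eig s lmin ->
  (exists X Y : 'M[C]_N, s = block_mx X Y (map_mx (fun z : C => z^*%C) Y)
                                     (map_mx (fun z : C => z^*%C) X)) ->
  mu \is Num.real -> mu != 0 -> v != 0 -> v *m (K *m s) = mu *: v ->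
  lmin <= `|mu|.
Proof.
move=> [_ lmin_le] hblk mu_real mu0 v0 hv.
case: (real_ltgt0P mu_real) => [mu_gt0|mu_lt0|mu_eq0].
- by apply: lmin_le; split => //; apply/eigenvalueP; exists v.
- apply: lmin_le; split; first by rewrite oppr_gt0.
  exact: eigenvalue_Kmx_opp (Jmx_cov_block hblk) mu_real v0 hv.
- by move: mu0; rewrite mu_eq0 eqxx.
Qed.

Lemma adjmxE m n (M : 'M[C]_(m, n)) : adjmx M = M^t*.
Proof. by apply/matrixP => a b; rewrite !mxE. Qed.

Lemma is_cov_mx_hermitian (s : 'M[C]_(N + N)) : is_cov_mx s -> s^t* = s.
Proof. by move=> [s_adj _ _]; rewrite -adjmxE. Qed.

Lemma is_cov_mx_posdef (s : 'M[C]_(N + N)) : is_cov_mx s ->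
  forall u : 'rV_(N + N), u != 0 -> 0 < (u *m s *m u^t*) 0 0.
Proof.
move=> [_ _ s_pd] u u0; have := s_pd (u^t*); rewrite adjmxE trmxCK; apply.
by apply: contra u0 => /eqP u0; rewrite -[u]trmxCK u0 trmx0 map_mx0.
Qed.

End SymplecticSpectrum.

(* Differentiate [F x b a = conj (F x a b)] in its real and imaginary parts. *)
Lemma mxpartial_hermitian (R : realType) (p n : nat) (F : 'rV[R]_p -> 'M[R[i]]_n) k e :
  (forall x, adjmx (F x) = F x) -> mx_differentiable F ->
  (mxpartial F k e)^t* = mxpartial F k e.
Proof.
move=> F_herm F_diff; apply/matrixP => a b; rewrite !mxE /cpartial.
have Fab x : F x a b = conjc (F x b a) by rewrite -[in LHS]F_herm /adjmx mxE mxE.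
have -> : (fun x => complex.Re (F x a b)) = (fun x => complex.Re (F x b a)).
  by apply/funext => x; rewrite Fab; case: (F x b a).
have -> : (fun x => complex.Im (F x a b)) = - (fun x => complex.Im (F x b a)).
  apply/funext => x; change (complex.Im (F x a b) = - complex.Im (F x b a)).
  by rewrite Fab; case: (F x b a).
by rewrite deriveN //; exact: diff_derivable (F_diff b a e).2.
Qed.

Section FiniteSums.
Variable C : numClosedFieldType.

Lemma cauchy_schwarz_sumr (I : finType) (a c : I -> C) :
  (forall x, 0 <= a x) -> (forall x, 0 <= c x) ->
  \sum_x a x * c x <= sqrtC (\sum_x a x ^+ 2) * sqrtC (\sum_x c x ^+ 2).
Proof.
move=> a_ge0 c_ge0.
set U := \sum_x a x ^+ 2; set V := \sum_x c x ^+ 2; set S := \sum_x a x * c x.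
have U_ge0 : 0 <= U by apply: sumr_ge0 => x _; rewrite exprn_ge0.
have V_ge0 : 0 <= V by apply: sumr_ge0 => x _; rewrite exprn_ge0.
have S_ge0 : 0 <= S by apply: sumr_ge0 => x _; rewrite mulr_ge0.
have lagrange : \sum_x \sum_y (a x * c y - a y * c x) ^+ 2 = U * V + U * V - (S ^+ 2 + S ^+ 2).
  have UV1 : U * V = \sum_x \sum_y a x ^+ 2 * c y ^+ 2.
    by rewrite mulr_suml; apply: eq_bigr => x _; rewrite mulr_sumr.
  have UV2 : U * V = \sum_x \sum_y a y ^+ 2 * c x ^+ 2.
    rewrite mulrC mulr_suml; apply: eq_bigr => x _; rewrite mulr_sumr.
    by apply: eq_bigr => y _; rewrite mulrC.
  have S2 : S ^+ 2 = \sum_x \sum_y (a x * c x) * (a y * c y).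
    by rewrite expr2 mulr_suml; apply: eq_bigr => x _; rewrite mulr_sumr.
  rewrite {1}UV1 {1}UV2 S2 -!big_split -sumrB /=; apply: eq_bigr => x _.
  rewrite -!big_split -sumrB /=; apply: eq_bigr => y _; ring.
have S2_le : S ^+ 2 <= U * V.
  have : 0 <= \sum_x \sum_y (a x * c y - a y * c x) ^+ 2.
    apply: sumr_ge0 => x _; apply: sumr_ge0 => y _.
    by rewrite -realEsqr realB ?realM ?ger0_real.
  by rewrite lagrange subr_ge0 -!mulr2n ler_pMn2r.
rewrite -sqrtCM ?nnegrE // -(sqrCK S_ge0).
by rewrite ler_sqrtC ?nnegrE ?exprn_ge0 ?mulr_ge0.
Qed.

Lemma partial_sum_geometric (I : finType) (c q : I -> C) m K :
  (forall x, q x != 1) ->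
  \sum_(m <= n < m + K) \sum_x c x * q x ^+ n.+1 =
  \sum_x c x * q x ^+ m.+1 / (1 - q x) - \sum_x c x * q x ^+ (m + K).+1 / (1 - q x).
Proof.
move=> q_neq1; elim: K => [|K IH]; first by rewrite addn0 big_geq // subrr.
rewrite addnS big_nat_recr ?leq_addr //= IH -addrA; congr (_ + _).
rewrite addrC -opprB; congr (- _); rewrite -sumrB; apply: eq_bigr => x _.
have q1 : 1 - q x != 0 by rewrite subr_eq0 eq_sym.
by rewrite [q x ^+ (m + K).+2]exprS; field.
Qed.

Lemma norm_geometric_tail_le (I : finType) (c q : I -> C) (rho : C) K :
  0 <= rho -> rho < 1 -> (forall x, `|q x| <= rho) ->
  `|\sum_x c x * q x ^+ K / (1 - q x)| <= (\sum_x `|c x|) * (rho ^+ K / (1 - rho)).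
Proof.
move=> rho_ge0 rho_lt1 q_le.
apply: le_trans (ler_norm_sum _ _ _) _; rewrite mulr_suml; apply: ler_sum => x _.
have rho1 : 0 < 1 - rho by rewrite subr_gt0.
have rho_q : 1 - rho <= `|1 - q x|.
  by apply: le_trans (lerB_dist _ _); rewrite normr1 lerB.
rewrite !normrM normfV normrX -mulrA ler_wpM2l //.
apply: ler_pM; rewrite ?exprn_ge0 ?invr_ge0 //.
- by apply: (@lerXn2r C K); rewrite ?nnegrE ?q_le.
- by rewrite lef_pV2 ?posrE // (lt_le_trans rho1).
Qed.

(* [b_k^2 G_kl b_l^2 G_lk = |b_k b_l G_kl|^2], then Cauchy-Schwarz. *)
Lemma sum_norm_mode_le n (b : 'rV[C]_n) (G H : 'M[C]_n) :
  (forall k, b 0 k \is Num.real) -> G^t* = G -> H^t* = H ->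
  \sum_(p : 'I_n * 'I_n) `|b 0 p.1 ^+ 2 * b 0 p.2 ^+ 2 * G p.1 p.2 * H p.2 p.1| <=
  sqrtC (\sum_k \sum_l b 0 k ^+ 2 * G k l * b 0 l ^+ 2 * G l k) *
  sqrtC (\sum_k \sum_l b 0 k ^+ 2 * H k l * b 0 l ^+ 2 * H l k).
Proof.
move=> b_real hG hH.
have normM (p : 'I_n * 'I_n) :
    `|b 0 p.1 ^+ 2 * b 0 p.2 ^+ 2 * G p.1 p.2 * H p.2 p.1| =
    `|b 0 p.1 * b 0 p.2 * G p.1 p.2| * `|b 0 p.1 * b 0 p.2 * H p.2 p.1|.
  by rewrite -normrM; congr `|_|; ring.
under eq_bigr => p _ do rewrite normM.
apply: le_trans; first by apply: cauchy_schwarz_sumr => p; exact: normr_ge0.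
rewrite (pair_bigA _ (fun k l => b 0 k ^+ 2 * G k l * b 0 l ^+ 2 * G l k)).
rewrite (pair_bigA _ (fun k l => b 0 k ^+ 2 * H k l * b 0 l ^+ 2 * H l k)) /=.
rewrite le_eqVlt; apply/orP; left; apply/eqP.
by congr (sqrtC _ * sqrtC _); apply: eq_bigr => [[k l]] _ /=;
  rewrite normCK !rmorphM /= !(conj_Creal (b_real _)) hermitian_conj_entry //; ring.
Qed.

End FiniteSums.

Section ComplexSeries.
Variable R : realType.
Local Notation C := (R[i]).
Local Open Scope classical_set_scope.

Lemma Re_sub (x y : C) : complex.Re (x - y) = complex.Re x - complex.Re y.
Proof. by case: x; case: y. Qed.

Lemma Im_sub (x y : C) : complex.Im (x - y) = complex.Im x - complex.Im y.
Proof. by case: x; case: y. Qed.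

Lemma normc_ge_Im (x : C) : (`|complex.Im x|%:C)%C <= `|x|.
Proof.
have -> : complex.Im x = - complex.Re (x * 'i%C) by rewrite ReiNIm opprK.
by rewrite normrN (le_trans (normc_ge_Re _)) // normrM normCi mulr1.
Qed.

Lemma eq_cseries_to (t t' : nat -> C) m r :
  (forall n, t n = t' n) -> cseries_to t m r -> cseries_to t' m r.
Proof. by move=> tt'; have -> : t = t' by apply/funext. Qed.

Lemma cvg_ReIm_geometric (z : nat -> C) (l : C) (g rho : R) :
  0 <= rho -> rho < 1 -> (forall L, `|z L - l| <= ((g * rho ^+ L)%:C)%C) ->
  (fun L => complex.Re (z L)) @ \oo --> complex.Re l /\
  (fun L => complex.Im (z L)) @ \oo --> complex.Im l.
Proof.
move=> rho_ge0 rho_lt1 z_near.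
have err0 : (fun L => g * rho ^+ L) @ \oo --> (0 : R).
  rewrite -(mulr0 g); apply: cvgM; first exact: cvg_cst.
  by apply: cvg_expr; rewrite ger0_norm.
have lower a : (fun L => a - g * rho ^+ L) @ \oo --> a.
  by rewrite -[X in _ --> X](subr0 a); apply: cvgB => //; exact: cvg_cst.
have upper a : (fun L => a + g * rho ^+ L) @ \oo --> a.
  by rewrite -[X in _ --> X](addr0 a); apply: cvgD => //; exact: cvg_cst.
split; apply: (squeeze_cvgr _ (lower _) (upper _)); apply: nearW => L;
  rewrite -ler_distl -lecR.
- by rewrite -Re_sub; exact: le_trans (normc_ge_Re _) (z_near L).
- by rewrite -Im_sub; exact: le_trans (normc_ge_Im _) (z_near L).
Qed.

Lemma cseries_to_geometric (I : finType) (t : nat -> C) (c q : I -> C) (rho : C) m :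
  0 <= rho -> rho < 1 -> (forall x, `|q x| <= rho) ->
  (forall n, t n = \sum_x c x * q x ^+ n.+1) ->
  exists r, cseries_to t m r /\ `|r| <= (\sum_x `|c x|) * (rho ^+ m.+1 / (1 - rho)).
Proof.
move=> rho_ge0 rho_lt1 q_le tE.
set r := \sum_x c x * q x ^+ m.+1 / (1 - q x).
exists r; split; last exact: norm_geometric_tail_le.
apply: (eq_cseries_to (fun n => esym (tE n))).
have q_neq1 x : q x != 1.
  by apply: contraTneq (q_le x) => ->; rewrite normr1 lt_geF.
pose B := (\sum_x `|c x|) * (rho ^+ m.+1 / (1 - rho)).
have B_ge0 : 0 <= B.
  apply: mulr_ge0; first by apply: sumr_ge0 => x _.
  by rewrite mulr_ge0 ?exprn_ge0 // invr_ge0 subr_ge0 ltW.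
have ReB : ((complex.Re B)%:C)%C = B by apply/RRe_real/ger0_real.
have Rerho : ((complex.Re rho)%:C)%C = rho by apply/RRe_real/ger0_real.
have Rerho_ge0 : 0 <= complex.Re rho by rewrite -lecR Rerho.
have Rerho_lt1 : complex.Re rho < 1 by rewrite -ltcR Rerho.
have err K : `|\sum_(m <= n < K + m) \sum_x c x * q x ^+ n.+1 - r| <=
             ((complex.Re B * complex.Re rho ^+ K)%:C)%C.
  rewrite addnC partial_sum_geometric // (addrC r) addrK normrN.
  apply: le_trans (norm_geometric_tail_le c (m + K).+1 rho_ge0 rho_lt1 q_le) _.
  rewrite rmorphM rmorphXn /= ReB Rerho /B -mulrA ler_wpM2l ?sumr_ge0 //.
  by rewrite mulrAC -exprD addSn.
have [ReP ImP] := cvg_ReIm_geometric Rerho_ge0 Rerho_lt1 err.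
by split; rewrite -(cvg_shiftn m).
Qed.

End ComplexSeries.

Lemma geometric_bound_closed_form (C : numClosedFieldType) (x l : C) M : 1 < l ->
  2^-1 * x * ((l^-1 ^+ 2) ^+ M.+2 / (1 - l^-1 ^+ 2)) =
  x / (2 * l ^+ (2 * M.+1) * (l ^+ 2 - 1)).
Proof.
move=> l_gt1.
have l2_neq0 : l ^+ 2 != 0 by rewrite expf_neq0 // gt_eqF // (lt_trans ltr01 l_gt1).
have l2_neq1 : l ^+ 2 - 1 != 0 by rewrite subr_eq0 gt_eqF // exprn_egt1.
rewrite exprS !exprVn exprM.
have lM_neq0 : (l ^+ 2) ^+ M.+1 != 0 by rewrite expf_neq0.
move: l2_neq0 l2_neq1 lM_neq0; set a := l ^+ 2; set P := a ^+ M.+1 => a0 a1 P0.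
have two_neq0 : (2 : C) != 0 by rewrite pnatr_eq0.
by field; rewrite P0 a1 a0.
Qed.

(* Each (k, l) term is geometric in n with ratio [(b_k b_l)^-1], of modulus at most [lmin^-2]. *)
Lemma mode_sum_remainder (R : realType) n (b : 'rV[R[i]]_n) (G H : 'M[R[i]]_n)
    (lmin : R[i]) M :
  (forall k, b 0 k \is Num.real) -> (forall k, lmin <= `|b 0 k|) -> 1 < lmin ->
  G^t* = G -> H^t* = H ->
  exists r : R[i],
    cseries_to (fun m => 2^-1 * \sum_k \sum_l ((b 0 k)^-1 ^+ m * b 0 k) * G k l *
                                              ((b 0 l)^-1 ^+ m * b 0 l) * H l k) M.+1 r /\
    `|r| <= sqrtC (\sum_k \sum_l b 0 k ^+ 2 * G k l * b 0 l ^+ 2 * G l k) *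
            sqrtC (\sum_k \sum_l b 0 k ^+ 2 * H k l * b 0 l ^+ 2 * H l k) /
            (2 * lmin ^+ (2 * M.+1) * (lmin ^+ 2 - 1)).
Proof.
move=> b_real b_ge lmin_gt1 hG hH.
have lmin_gt0 : 0 < lmin := lt_trans ltr01 lmin_gt1.
have b_neq0 k : b 0 k != 0 by rewrite -normr_gt0 (lt_le_trans lmin_gt0).
pose q (x : 'I_n * 'I_n) := (b 0 x.1 * b 0 x.2)^-1.
pose c (x : 'I_n * 'I_n) := 2^-1 * (b 0 x.1 ^+ 2 * b 0 x.2 ^+ 2 * G x.1 x.2 * H x.2 x.1).
have rho_ge0 : 0 <= lmin^-1 ^+ 2 by rewrite exprn_ge0 // invr_ge0 ltW.
have rho_lt1 : lmin^-1 ^+ 2 < 1 by rewrite exprn_ilt1 ?invr_ge0 ?ltW // invf_lt1.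
have q_le x : `|q x| <= lmin^-1 ^+ 2.
  rewrite normfV normrM invfM expr2.
  by apply: ler_pM; rewrite ?invr_ge0 ?normr_ge0 ?lef_pV2 ?posrE ?normr_gt0.
have termE m : 2^-1 * \sum_k \sum_l ((b 0 k)^-1 ^+ m * b 0 k) * G k l *
                                    ((b 0 l)^-1 ^+ m * b 0 l) * H l k =
               \sum_x c x * q x ^+ m.+1.
  rewrite mulr_sumr; under eq_bigr => k _ do rewrite mulr_sumr.
  rewrite pair_bigA /=; apply: eq_bigr => [[k l]] _ /=.
  rewrite /c /q /= invfM exprMn !exprS.
  have := b_neq0 k; have := b_neq0 l.
  move: (b 0 k) (b 0 l) ((b 0 k)^-1 ^+ m) ((b 0 l)^-1 ^+ m) => x y u w y0 x0.
  by rewrite !expr0 !mulr1; field; rewrite x0 y0.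
have [r [hr r_le]] := cseries_to_geometric M.+1 rho_ge0 rho_lt1 q_le termE.
exists r; split => //.
apply: le_trans r_le _; rewrite -geometric_bound_closed_form //.
apply: ler_wpM2r; first by apply: divr_ge0; [exact: exprn_ge0 | rewrite subr_ge0 ltW].
have half_ge0 : 0 <= (2 : R[i])^-1 by rewrite invr_ge0 ler0n.
under eq_bigr => x _ do rewrite normrM (ger0_norm half_ge0).
by rewrite -mulr_sumr ler_wpM2l // sum_norm_mode_le.
Qed.

Theorem mainTheorem5 (R : realType) (N p : nat)
  (sigma : 'rV[R]_p -> 'M[R[i]]_(N + N))
  (Hcov : forall e, is_cov_mx (sigma e))
  (Hdiff : mx_differentiable sigma)
  (e : 'rV[R]_p) (i j : 'I_p) (lmin : R[i]) (M : nat)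
  (Hmin : min_symp_eig (sigma e) lmin) (Hgt1 : 1 < lmin) :
  let A := @Kmx R N *m sigma e in
  let dA := fun k => @Kmx R N *m mxpartial sigma k e in
  exists r : R[i],
    cseries_to (fun n => 2^-1 * \tr (invmx A ^+ n *m dA i *m (invmx A ^+ n *m dA j))) M.+1 r /\
    `|r| <= sqrtC (\tr ((A *m dA i) *m (A *m dA i))) * sqrtC (\tr ((A *m dA j) *m (A *m dA j)))
            / (2 * lmin ^+ (2 * M.+1) * (lmin ^+ 2 - 1)).
Proof.
move=> A dA.
have [_ s_block _] := Hcov e.
have KK := Kmx_involutive R N.
have [Y [b [YsY YsK b_real]]] := simultaneous_diag
  (is_cov_mx_hermitian (Hcov e)) (is_cov_mx_posdef (Hcov e)) (trmxC_Kmx R N).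
have b_ge k : lmin <= `|b 0 k|.
  apply: (min_symp_eig_le_norm Hmin s_block (b_real k)).
  - exact: pencil_eig_neq0 KK YsY YsK k.
  - exact: pencil_row_neq0 YsY k.
  - exact: pencil_row_eigen YsK k.
have G_herm k : (Y *m mxpartial sigma k e *m Y^t*)^t* = Y *m mxpartial sigma k e *m Y^t*.
  apply/hermitian_congr/mxpartial_hermitian => // x.
  by rewrite adjmxE is_cov_mx_hermitian.
have [r [hr r_le]] := mode_sum_remainder M b_real b_ge Hgt1 (G_herm i) (G_herm j).
exists r; split; last by rewrite /A /dA !(pencil_trace_sqr YsY YsK).
apply: eq_cseries_to hr => m.
by rewrite /A /dA (pencil_trace_invmx_exp KK YsY YsK).
Qed.
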